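(* Let $x,y\ge 2$ be coprime integers, $p\ge 1$ an integer, and $q=pxy-1$. Choose integers $i,j$ with $xj+yi=1$ and $0<i<x$ (so $j<0$). Let $G$ be the group generated by $a,b,t$ subject to the relations $a^x=b^y$ and $\mu^q\lambda^p=t^p$, where $\mu=b^ja^i$ and $\lambda=\mu^{-xy}a^x$. Then in every quotient $H$ of $G$ one has $t^p=a^{xp-i}b^{-j}$. Consequently, if $H$ is left-orderable, then (the images of) $t$, $a$ and $b$ all have the same sign with respect to any left order on $H$.
   Context: The group $G$ is the fundamental group of the complement of the $(p,q)$-cable of the $(x,y)$-torus knot; $\mu,\lambda$ are the meridian and longitude of the torus knot and $\mu,\lambda$ commute. A left order on a group $H$ is a strict total order with $ga<gb$ whenever $a<b$; its positive cone is $P=\{g: g>1\}$. Two elements have the same sign if both lie in $P$, both lie in $P^{-1}=\{g:g<1\}$, or both equal $1$. A left-orderable group is a nontrivial group admitting a left order. *)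

From HB Require Import structures.
From mathcomp Require Import all_boot all_order all_algebra.
Set Implicit Arguments. Unset Strict Implicit. Unset Printing Implicit Defensive.
Import Order.TTheory GRing.Theory Num.Theory.

Definition expgz (G : groupType) (x : G) (z : int) : G :=
  match z with
  | Posz n => (x ^+ n)%g
  | Negz n => ((x ^+ n.+1)^-1)%g
  end.

Definition is_left_order (H : groupType) (lt : H -> H -> Prop) : Prop :=
  (forall g, ~ lt g g) /\
  (forall f g h, lt f g -> lt g h -> lt f h) /\
  (forall f g, f <> g -> lt f g \/ lt g f) /\
  (forall g f h, lt f h -> lt (g * f)%g (g * h)%g).

Definition left_orderable (H : groupType) : Prop :=
  (exists g : H, g <> 1%g) /\ exists lt : H -> H -> Prop, is_left_order lt.

Definition same_sign (H : groupType) (lt : H -> H -> Prop) (g h : H) : Prop :=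
  (lt 1%g g /\ lt 1%g h) \/ (lt g 1%g /\ lt h 1%g) \/ (g = 1%g /\ h = 1%g).

(* Let [z = a^x = b^y]; it is central in the subgroup generated by [a] and [b],
   and in particular commutes with [mu = b^j a^i].  Hence
   [lambda^p = mu^(-pxy) z^p], so [mu^q lambda^p = mu^-1 z^p = a^(xp-i) b^(-j)],
   where all three exponents [p], [xp - i] and [-j] are positive.  For a left
   order, a positive power of [g] has the sign of [g], and a product of two
   elements of one sign has that sign; so [a^x = b^y] gives [a ~ b], and then
   [t^p = a^(xp-i) b^(-j)] gives [t ~ a]. *)
From HB Require Import structures.
From mathcomp Require Import all_boot all_order all_algebra.
From mathcomp Require Import zify.
Set Implicit Arguments.
Unset Strict Implicit.
Unset Printing Implicit Defensive.
Import Order.TTheory GRing.Theory Num.Theory.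

Lemma expgz_nat (G : groupType) (g : G) (n : nat) : expgz g n = (g ^+ n)%g.
Proof. by []. Qed.

Lemma expgz_opp_nat (G : groupType) (g : G) (n : nat) :
  expgz g (- n%:Z)%R = (g ^+ n)^-1%g.
Proof. by case: n => [|n] //=; rewrite invg1. Qed.

Section SameSign.
Variables (H : groupType) (lt : H -> H -> Prop).
Hypothesis hlt : is_left_order lt.

Lemma same_sign_refl g : same_sign lt g g.
Proof.
case: hlt => _ [_ [tot _]].
have [->|/eqP g1] := eqVneq g 1%g; first by right; right.
by case: (tot _ _ g1) => h; [right; left | left].
Qed.

Lemma same_sign_sym g h : same_sign lt g h -> same_sign lt h g.
Proof. by rewrite /same_sign; intuition. Qed.

Lemma same_sign_trans g h k :
  same_sign lt g h -> same_sign lt h k -> same_sign lt g k.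
Proof.
case: hlt => irr [tr _].
have sign_excl u : lt 1%g u -> lt u 1%g -> False.
  by move=> u1 u2; apply: (irr 1%g); apply: tr u1 u2.
by rewrite /same_sign; intuition; subst;
  solve [left; split | right; left; split | right; right; split | exfalso; eauto].
Qed.

Lemma same_sign_mulr g h : same_sign lt g h -> same_sign lt g (g * h)%g.
Proof.
case: hlt => _ [tr [_ inv]].
rewrite /same_sign => -[[g1 h1]|[[g1 h1]|[-> ->]]].
- left; split => //; apply: tr g1 _.
  by have := inv g _ _ h1; rewrite mulg1.
- right; left; split => //; apply: tr _ g1.
  by have := inv g _ _ h1; rewrite mulg1.
- by right; right; rewrite mulg1.
Qed.

Lemma same_sign_expg g n : (0 < n)%N -> same_sign lt g (g ^+ n)%g.
Proof.
case: n => // n _; elim: n => [|n IHn].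
  by rewrite expg1; apply: same_sign_refl.
by rewrite expgS; apply: same_sign_mulr.
Qed.

Lemma same_sign_of_expg_eq g h m n : (0 < m)%N -> (0 < n)%N ->
  (g ^+ m = h ^+ n)%g -> same_sign lt g h.
Proof.
move=> m0 n0 ghmn; apply: same_sign_trans (same_sign_expg g m0) _.
by rewrite ghmn; apply/same_sign_sym/same_sign_expg.
Qed.

Lemma same_sign_mul_expg g h m n : (0 < m)%N -> (0 < n)%N ->
  same_sign lt g h -> same_sign lt g (g ^+ m * h ^+ n)%g.
Proof.
move=> m0 n0 gh; have gm := same_sign_expg g m0.
have gm_hn : same_sign lt (g ^+ m) (h ^+ n).
  apply: same_sign_trans (same_sign_sym gm) (same_sign_trans gh _).
  exact: same_sign_expg.
exact: same_sign_trans gm (same_sign_mulr gm_hn).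
Qed.

End SameSign.

Lemma commute_expg_eq (G : groupType) (a b : G) (m n : nat) :
  (a ^+ m = b ^+ n)%g -> commute (a ^+ m) b.
Proof. by move=> ->; apply/commute_sym/commuteX. Qed.

Lemma expg_pred_mul_expgV (G : groupType) (mu z : G) (m P : nat) :
  commute mu z -> (0 < m * P)%N ->
  (mu ^+ (m * P).-1 * (mu ^- m * z) ^+ P = mu^-1 * z ^+ P)%g.
Proof.
move=> cmuz mP0.
have cVz : commute (mu ^- m) z.
  by apply/commute_sym/commuteV/commuteX/commute_sym.
rewrite (expgMn _ cVz) expVgn -expgnA mulgA; congr (_ * _)%g.
by rewrite -{2}(prednK mP0) expgS invgM mulgA mulgV mul1g.
Qed.

Lemma torus_relation_expg (G : groupType) (a b : G) (X Y P I J : nat) :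
  (a ^+ X = b ^+ Y)%g -> (I <= X * P)%N ->
  (((b ^+ J)^-1 * a ^+ I)^-1 * (a ^+ X) ^+ P = a ^+ (X * P - I) * b ^+ J)%g.
Proof.
move=> abXY IXP; rewrite invgM invgK -expgnA -mulgA.
have -> : commute (b ^+ J) (a ^+ (X * P))%g.
  by rewrite expgnA; apply/commute_sym/commuteX2; exact: commute_expg_eq abXY.
by rewrite mulgA; congr (_ * _)%g; rewrite -{1}(subnKC IXP) expgnDr mulKg.
Qed.

Lemma cable_relation_expg (G : groupType) (a b : G) (X Y P I J : nat) :
  (a ^+ X = b ^+ Y)%g -> (I <= X * P)%N -> (0 < X * Y * P)%N ->
  let mu := (b ^- J * a ^+ I)%g in
  (mu ^+ (X * Y * P).-1 * (mu ^- (X * Y) * a ^+ X) ^+ P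
    = a ^+ (X * P - I) * b ^+ J)%g.
Proof.
move=> abXY IXP XYP0 mu.
have mu_z : commute mu (a ^+ X).
  apply/commute_sym/commuteM; last exact/commuteX2/commute_refl.
  exact/commuteV/commuteX/(commute_expg_eq abXY).
by rewrite expg_pred_mul_expgV // (torus_relation_expg _ abXY).
Qed.

Theorem lemma3p1 (x y p q i j : int)
  (hx : (2 <= x)%R) (hy : (2 <= y)%R) (hxy : coprimez x y)
  (hp : (1 <= p)%R) (hq : q = (p * x * y - 1)%R)
  (hij : (x * j + y * i = 1)%R) (hi0 : (0 < i)%R) (hix : (i < x)%R)
  (H : groupType) (a b t : H)
  (rel1 : expgz a x = expgz b y)
  (rel2 : let mu := (expgz b j * expgz a i)%g in
          let lambda := (expgz mu (- (x * y))%R * expgz a x)%g in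
          (expgz mu q * expgz lambda p)%g = expgz t p) :
  expgz t p = (expgz a (x * p - i)%R * expgz b (- j)%R)%g /\
  (left_orderable H ->
   forall lt : H -> H -> Prop, is_left_order lt ->
     same_sign lt t a /\ same_sign lt t b /\ same_sign lt a b).
Proof.
have j_lt0 : (j < 0)%R by nia.
have [X eX] : exists X : nat, x = X by exists `|x|%N; lia.
have [Y eY] : exists Y : nat, y = Y by exists `|y|%N; lia.
have [P eP] : exists P : nat, p = P by exists `|p|%N; lia.
have [I eI] : exists I : nat, i = I by exists `|i|%N; lia.
have [J eJ] : exists J : nat, j = (- J%:Z)%R by exists `|j|%N; lia.
subst x y p i j q; cbv zeta in rel2.
have -> : (X%:Z * P%:Z - I%:Z = (X * P - I)%N%:Z)%R by nia.
rewrite (_ : P%:Z * X%:Z * Y%:Z - 1 = (X * Y * P).-1%:Z)%R in rel2; last by nia.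
rewrite -PoszM !expgz_opp_nat !expgz_nat in rel1 rel2.
rewrite opprK !expgz_nat.
have ht : (t ^+ P = a ^+ (X * P - I) * b ^+ J)%g.
  by rewrite -rel2 cable_relation_expg //; nia.
split=> // _ lt hlt.
have [X0 Y0 P0 XPI0 J0] : [/\ 0 < X, 0 < Y, 0 < P, 0 < X * P - I & 0 < J]%N.
  by split; nia.
have sab := same_sign_of_expg_eq hlt X0 Y0 rel1.
have sta : same_sign lt t a.
  apply: (same_sign_trans hlt (same_sign_expg hlt t P0)).
  by rewrite ht; exact: same_sign_sym (same_sign_mul_expg hlt XPI0 J0 sab).
have stb := same_sign_trans hlt sta sab.
by split=> //; split.
Qed.
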